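(* Let $G$ be a simple, undirected, locally finite graph and $i\sim j$ an edge such that $\sharp_\square^i(i,j)\neq\emptyset$. Then $$\sharp_\square^{\mathfrak m}(i,j)\ \ge\ \frac{\max\{|\sharp_\square^i(i,j)|,\,|\sharp_\square^j(i,j)|\}}{\gamma_{\max}(i,j)}.$$
   Context: $S_1(v)$ denotes the set of neighbours of $v$. For an edge $i\sim j$: $\sharp_\square^i(i,j)=\{k\in S_1(i)\setminus (S_1(j)\cup\{j\}) : \exists\, w\in (S_1(k)\cap S_1(j))\setminus (S_1(i)\cup\{i\})\}$, and $\sharp_\square^j(i,j)$ is defined symmetrically with the roles of $i$ and $j$ exchanged (these are the neighbours of $i$, resp. $j$, lying on a 4-cycle $i\sim k\sim w\sim j\sim i$ with no diagonal). Note $\sharp_\square^i\ne\emptyset$ iff $\sharp_\square^j\neq\emptyset$. $\gamma_{\max}(i,j)=\max\big\{\max_{k\in\sharp_\square^i}|(S_1(k)\cap S_1(j))\setminus(S_1(i)\cup\{i\})|,\ \max_{w\in\sharp_\square^j}|(S_1(w)\cap S_1(i))\setminus(S_1(j)\cup\{j\})|\big\}$. For $U\subset V$, $\mathcal D(U)$ is the set of injective maps $\varphi:U\to V$ with $z\sim\varphi(z)$ for all $z\in U$, and $\sharp_\square^{\mathfrak m}(i,j)=\max\{|U|: U\subset\sharp_\square^i,\ \exists\varphi\in\mathcal D(U)\text{ with }\varphi(U)\subset\sharp_\square^j\}$. *)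

From HB Require Import structures.
From mathcomp Require Import all_boot all_order all_algebra.
From mathcomp Require Import finmap.
From mathcomp Require Import boolp.
Set Implicit Arguments. Unset Strict Implicit. Unset Printing Implicit Defensive.
Local Open Scope fset_scope.

(* A simple undirected locally finite graph on a vertex type V is given by its
   neighbourhood map S1 : V -> {fset V} (finite by local finiteness). *)
Definition simple_graph (V : choiceType) (S1 : V -> {fset V}) : Prop :=
  (forall v w : V, (w \in S1 v) = (v \in S1 w)) /\ (forall v : V, v \notin S1 v).

Definition sqW (V : choiceType) (S1 : V -> {fset V}) (i j k : V) : {fset V} :=
  (S1 k `&` S1 j) `\` (S1 i `|` [fset i]).

Definition sq_i (V : choiceType) (S1 : V -> {fset V}) (i j : V) : {fset V} :=
  [fset k in S1 i `\` (S1 j `|` [fset j]) | sqW S1 i j k != fset0].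

Definition sq_j (V : choiceType) (S1 : V -> {fset V}) (i j : V) : {fset V} :=
  sq_i S1 j i.

Definition gamma_max (V : choiceType) (S1 : V -> {fset V}) (i j : V) : nat :=
  maxn (\max_(k <- sq_i S1 i j) #|` sqW S1 i j k|)
       (\max_(w <- sq_j S1 i j) #|` sqW S1 j i w|).

Definition in_D (V : choiceType) (S1 : V -> {fset V}) (U : {fset V}) (phi : V -> V) : Prop :=
  {in U &, injective phi} /\ (forall z, z \in U -> phi z \in S1 z).

Definition sq_m (V : choiceType) (S1 : V -> {fset V}) (i j : V) : nat :=
  \max_(U <- enum_fset (fpowerset (sq_i S1 i j))
        | `[< exists phi : V -> V, in_D S1 U phi /\
                (forall z, z \in U -> phi z \in sq_j S1 i j) >]) #|` U|.

(** Take a largest [U ⊆ ♯□^i(i,j)] admitting an injective adjacent map [φ] into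
    [♯□^j(i,j)].  By maximality, every square through a vertex [k ∉ U] of
    [♯□^i] closes in [φ(U)], and every square through a vertex [w ∉ φ(U)] of
    [♯□^j] closes in [U].  Hence every [k ∈ ♯□^i] lies in the square set of some
    [φ(z)], and every [w ∈ ♯□^j] in that of some [z ∈ U]; each such set has at
    most [γ_max(i,j)] elements, so both [|♯□^i|] and [|♯□^j|] are at most
    [|U| γ_max(i,j) = ♯□^m(i,j) γ_max(i,j)]. *)

From mathcomp Require Import all_boot all_order all_algebra.
From mathcomp Require Import finmap.
From mathcomp Require Import boolp.
Import Order.TTheory GRing.Theory Num.Theory.
Set Implicit Arguments. Unset Strict Implicit.
Local Open Scope fset_scope.

Lemma bigmax_seq_attained (I : eqType) (r : seq I) (P : pred I) (F : I -> nat) :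
  has P r -> exists2 x, x \in r & P x /\ \max_(i <- r | P i) F i = F x.
Proof.
move=> /hasP[x0 x0r Px0].
set M := \max_(i <- r | P i) F i.
pose attained m := m = 0 \/ exists2 x, x \in r & P x /\ m = F x.
have [M0|//] : attained M.
  rewrite /M big_seq_cond; apply: (big_ind attained) => [|a b ha hb|x /andP[xr Px]].
  - by left.
  - by case: leqP.
  - by right; exists x.
exists x0 => //; split=> //; apply/eqP; rewrite M0 eq_sym -leqn0 -M0.
exact: leq_bigmax_seq.
Qed.

Lemma card_fset_le_mul_fibers (T : choiceType) (I : eqType) (R : T -> I -> bool)
    (c : nat) (Y : seq I) (X : {fset T}) :
  (forall x, x \in X -> exists2 y, y \in Y & R x y) ->
  (forall y, y \in Y -> #|` [fset x in X | R x y]| <= c) ->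
  #|` X| <= size Y * c.
Proof.
elim: Y X => [|y Y IH] X hX hc.
  by case: (fset_0Vmem X) => [->|[x /hX[]]]; rewrite ?cardfs0.
pose X1 := [fset x in X | R x y]; pose X2 := [fset x in X | ~~ R x y].
have X_sub : X `<=` X1 `|` X2.
  by apply/fsubsetP => x xX; rewrite !inE xX; case: (R x y).
have X1_le : #|` X1| <= c by apply: hc; rewrite inE eqxx.
have X2_le : #|` X2| <= size Y * c.
  apply: IH => [x|y' y'Y].
    rewrite !inE => /andP[xX nR]; have [y'] := hX x xX.
    rewrite inE => /orP[/eqP -> Ry|y'Y Ry']; first by rewrite Ry in nR.
    by exists y'.
  apply: leq_trans (hc y' _); last by rewrite inE y'Y orbT.
  by apply: fsubset_leq_card; apply/fsubsetP => x; rewrite !inE => /andP[/andP[-> _] ->].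
rewrite (leq_trans (fsubset_leq_card X_sub)) // (leq_trans (leq_card_fsetU _ _).1) //.
by rewrite /= mulSn leq_add.
Qed.

Section SquareNeighbours.
Variables (V : choiceType) (S1 : V -> {fset V}).

Definition sq_matchable (i j : V) (U : {fset V}) : Prop :=
  exists phi : V -> V, in_D S1 U phi /\ (forall z, z \in U -> phi z \in sq_j S1 i j).

Lemma leq_sq_m i j U : U `<=` sq_i S1 i j -> sq_matchable i j U -> #|` U| <= sq_m S1 i j.
Proof.
move=> UA Umatch; apply: (leq_bigmax_seq (F := fun U : {fset V} => #|` U|)).
  by change (U \in fpowerset (sq_i S1 i j)); rewrite fpowersetE.
exact/asboolP.
Qed.

Lemma sq_m_attained i j :
  exists2 U, U `<=` sq_i S1 i j & sq_matchable i j U /\ #|` U| = sq_m S1 i j.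
Proof.
pose matchable U := `[< sq_matchable i j U >].
have fset0_matchable : has matchable (enum_fset (fpowerset (sq_i S1 i j))).
  apply/hasP; exists fset0.
    by change (fset0 \in fpowerset (sq_i S1 i j)); rewrite fpowersetE fsub0set.
  by apply/asboolP; exists id; split; [split=> [x y|z]|move=> z]; rewrite inE.
have [U Upow [/asboolP Umatch Umax]] :=
  bigmax_seq_attained (fun U : {fset V} => #|` U|) fset0_matchable.
by exists U; rewrite // -fpowersetE.
Qed.

Lemma card_sqW_le_gamma_i i j k :
  k \in sq_i S1 i j -> #|` sqW S1 i j k| <= gamma_max S1 i j.
Proof.
move=> kA; apply: leq_trans (leq_maxl _ _).
exact: (leq_bigmax_seq (F := fun k => #|` sqW S1 i j k|)).
Qed.

Lemma card_sqW_le_gamma_j i j w :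
  w \in sq_j S1 i j -> #|` sqW S1 j i w| <= gamma_max S1 i j.
Proof.
move=> wB; apply: leq_trans (leq_maxr _ _).
exact: (leq_bigmax_seq (F := fun w => #|` sqW S1 j i w|)).
Qed.

Hypothesis S1_sym : forall v w : V, (w \in S1 v) = (v \in S1 w).

Lemma mem_sqW i j k w :
  (w \in sqW S1 i j k) = [&& w \in S1 k, w \in S1 j, w \notin S1 i & w != i].
Proof.
rewrite !inE.
by case: (w \in S1 k); case: (w \in S1 j); case: (w \in S1 i); case: (w == i).
Qed.

Lemma mem_sq_i i j k :
  (k \in sq_i S1 i j) = [&& k \in S1 i, k \notin S1 j, k != j & sqW S1 i j k != fset0].
Proof.
rewrite /sq_i !inE.
by case: (k \in S1 i); case: (k \in S1 j); case: (k == j); case: (sqW S1 i j k != fset0).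
Qed.

Lemma mem_sqW_sym i j k w : k \in sq_i S1 i j -> w \in sq_j S1 i j ->
  (w \in sqW S1 i j k) = (k \in sqW S1 j i w).
Proof.
rewrite /sq_j !mem_sq_i !mem_sqW => /and4P[-> -> -> _] /and4P[-> -> -> _].
by rewrite S1_sym.
Qed.

Lemma sqW_sub_sq_j i j k w : k \in sq_i S1 i j -> w \in sqW S1 i j k -> w \in sq_j S1 i j.
Proof.
rewrite mem_sq_i mem_sqW => /and4P[ki nkj kj _] /and4P[wk wj nwi wi].
rewrite /sq_j mem_sq_i wj nwi wi; apply/fset0Pn; exists k.
by rewrite mem_sqW -S1_sym wk ki nkj kj.
Qed.

Lemma sqW_sub_sq_i i j w k : w \in sq_j S1 i j -> k \in sqW S1 j i w -> k \in sq_i S1 i j.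
Proof. exact: sqW_sub_sq_j. Qed.

Section MaximumMatching.
Variables (i j : V) (U : {fset V}) (phi : V -> V).
Hypotheses (U_sub : U `<=` sq_i S1 i j) (phi_inj : {in U &, injective phi}).
Hypotheses (phi_adj : forall z, z \in U -> phi z \in S1 z).
Hypotheses (phi_sq_j : forall z, z \in U -> phi z \in sq_j S1 i j).
Hypothesis U_max : sq_m S1 i j <= #|` U|.

Lemma phi_sqW z : z \in U -> phi z \in sqW S1 i j z.
Proof.
move=> zU; rewrite mem_sqW phi_adj //=.
by move: (phi_sq_j zU); rewrite /sq_j mem_sq_i => /and4P[-> -> -> _].
Qed.

Lemma sqW_phi z : z \in U -> z \in sqW S1 j i (phi z).
Proof. by move=> zU; rewrite -mem_sqW_sym ?phi_sqW ?phi_sq_j ?(fsubsetP U_sub). Qed.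

(* Otherwise [φ] extends to [k |-> w], contradicting the maximality of [U]. *)
Lemma sqW_sub_image k w :
  k \in sq_i S1 i j -> k \notin U -> w \in sqW S1 i j k -> w \in phi @` U.
Proof.
move=> kA kU wk; apply/negPn/negP => wU.
pose phi' x := if x == k then w else phi x.
suff : #|` k |` U| <= #|` U| by rewrite cardfsU1 kU ltnn.
apply: leq_trans U_max; apply: leq_sq_m.
  by apply/fsubsetP => x /fset1UP[->|/(fsubsetP U_sub)].
have phi'_k : phi' k = w by rewrite /phi' eqxx.
have phi'_U x : x \in U -> phi' x = phi x.
  by move=> xU; rewrite /phi' ifN //; apply: contraNneq kU => <-.
exists phi'; split; first split.
- move=> x y /fset1UP[-> | xU] /fset1UP[-> | yU] //; rewrite ?phi'_k ?phi'_U //.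
  + by move=> wy; case/negP: wU; apply/imfsetP; exists y.
  + by move=> xw; case/negP: wU; apply/imfsetP; exists x.
  + exact: phi_inj.
- move=> z /fset1UP[-> | zU]; last by rewrite phi'_U ?phi_adj.
  by move: wk; rewrite phi'_k mem_sqW => /and4P[].
- move=> z /fset1UP[-> | zU]; last by rewrite phi'_U ?phi_sq_j.
  by rewrite phi'_k; apply: sqW_sub_sq_j wk.
Qed.

Lemma sqW_sub_domain w k :
  w \in sq_j S1 i j -> w \notin phi @` U -> k \in sqW S1 j i w -> k \in U.
Proof.
move=> wB wU kw; have kA := sqW_sub_sq_i wB kw.
apply/negPn/negP => kU; case/negP: wU.
by apply: (sqW_sub_image kA kU); rewrite mem_sqW_sym.
Qed.

Lemma card_sq_i_le : #|` sq_i S1 i j| <= #|` U| * gamma_max S1 i j.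
Proof.
apply: (@card_fset_le_mul_fibers _ _ (fun k z => (k == z) || (phi z \in sqW S1 i j k))
  (gamma_max S1 i j) (enum_fset U)) => [k kA | z zU].
  have [kU|kU] := boolP (k \in U); first by exists k; rewrite ?eqxx.
  move: (kA); rewrite mem_sq_i => /and4P[_ _ _ /fset0Pn[w wk]].
  have /imfsetP[z zU wz] := sqW_sub_image kA kU wk.
  by exists z; rewrite // -wz wk orbT.
apply: leq_trans (card_sqW_le_gamma_j (phi_sq_j zU)).
apply/fsubset_leq_card/fsubsetP => k; rewrite in_fset /= => /andP[kA /orP[/eqP ->|]].
  exact: sqW_phi.
by rewrite mem_sqW_sym ?phi_sq_j.
Qed.

Lemma card_sq_j_le : #|` sq_j S1 i j| <= #|` U| * gamma_max S1 i j.
Proof.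
apply: (@card_fset_le_mul_fibers _ _ (fun w z => (w == phi z) || (w \in sqW S1 i j z))
  (gamma_max S1 i j) (enum_fset U)) => [w wB | z zU].
  have [/imfsetP[z zU ->]|wU] := boolP (w \in phi @` U); first by exists z; rewrite ?eqxx.
  move: (wB); rewrite /sq_j mem_sq_i => /and4P[_ _ _ /fset0Pn[k kw]].
  have kU := sqW_sub_domain wB wU kw.
  by exists k; rewrite // mem_sqW_sym ?kw ?orbT ?(fsubsetP U_sub).
apply: leq_trans (card_sqW_le_gamma_i (fsubsetP U_sub z zU)).
apply/fsubset_leq_card/fsubsetP => w; rewrite in_fset /= => /andP[_ /orP[/eqP ->|//]].
exact: phi_sqW.
Qed.

End MaximumMatching.

Lemma sq_card_le_sq_m_mul_gamma i j :
  maxn #|` sq_i S1 i j| #|` sq_j S1 i j| <= sq_m S1 i j * gamma_max S1 i j.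
Proof.
have [U U_sub [[phi [[phi_inj phi_adj] phi_sq_j]] U_card]] := sq_m_attained i j.
have U_max : sq_m S1 i j <= #|` U| by rewrite U_card.
by rewrite -U_card geq_max (card_sq_i_le U_sub phi_inj phi_adj phi_sq_j U_max)
  (card_sq_j_le U_sub phi_inj phi_adj phi_sq_j U_max).
Qed.

End SquareNeighbours.

Local Open Scope ring_scope.

Theorem mainTheorem3 (V : choiceType) (S1 : V -> {fset V}) (i j : V)
  (hG : simple_graph S1) (hij : j \in S1 i) (hne : sq_i S1 i j != fset0) :
  (maxn #|` sq_i S1 i j| #|` sq_j S1 i j|)%:R / (gamma_max S1 i j)%:R
    <= (sq_m S1 i j)%:R :> rat.
Proof.
have bound := sq_card_le_sq_m_mul_gamma hG.1 i j.
(* For [γ_max = 0] the quotient is [0] by the convention [x / 0 = 0]. *)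
have [->|gamma_gt0] := posnP (gamma_max S1 i j); first by rewrite invr0 mulr0.
by rewrite ler_pdivrMr ?ltr0n // -natrM ler_nat.
Qed.
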